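(* Let $L>0$, $a,b\in C^1([-L,L])$ with $a,b>0$, and $G\in C^{1,1}_{\rm loc}(\mathbb{R})$ (not necessarily even), and set $f:=-G'$. Assume there exists $x_0\in[-L,L]$ such that $$(ab)'\le 0\ \text{in }(-L,x_0]\quad\text{and}\quad (ab)'\ge 0\ \text{in }[x_0,L).$$ Let $m>0$. Then every solution $u$ of $$-(a u')'=b f(u)\ \text{ in }(-L,L),\qquad u(L)=-u(-L)=m$$ is increasing, provided either (i) $G\ge G(-m)=G(m)$ in $\mathbb{R}$; or (ii) for some $M\in(0,m]$, $G\ge G(-M)=G(M)$ in $[-M,M]$, $G'\le 0$ in $(-\infty,-M)$, and $G'\ge 0$ in $(M,+\infty)$.
   Context: A solution is a function $u\in H^1((-L,L))$ satisfying the equation weakly (hence classically, $u\in C^2((-L,L))$) together with the boundary conditions. *)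

From Stdlib Require Import Reals.
Open Scope R_scope.

Definition cont_on_closed (f : R -> R) (lo hi : R) : Prop :=
  forall x, lo <= x <= hi -> limit1_in f (fun y => lo <= y <= hi) (f x) x.

Definition C1_closed (f df : R -> R) (lo hi : R) : Prop :=
  cont_on_closed f lo hi /\ cont_on_closed df lo hi /\
  (forall x, lo < x < hi -> derivable_pt_lim f x (df x)).

Definition C11_loc (G g : R -> R) : Prop :=
  (forall x, derivable_pt_lim G x (g x)) /\
  (forall K, 0 < K -> exists C, forall x y, Rabs x <= K -> Rabs y <= K ->
      Rabs (g x - g y) <= C * Rabs (x - y)).

Definition is_solution (a b f : R -> R) (L m : R) (u du : R -> R) : Prop :=
  cont_on_closed u (-L) L /\
  (forall x, -L < x < L -> derivable_pt_lim u x (du x)) /\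
  (forall x, -L < x < L ->
      derivable_pt_lim (fun y => a y * du y) x (- (b x * f (u x)))) /\
  u L = m /\ u (-L) = - m.

(* Along a solution, the energy E = (a u')^2/(ab) - 2 G(u) satisfies
   E' = -(ab)' (u'/b)^2, so E increases up to x0 and decreases after it.  At a
   critical point x1 of u this gives G(u(x1)) <= G(u(y)) for every y between x1
   and the endpoint on the far side of x0, where u = +-m.  In case (i) this makes
   u(x1) a global minimum point of G.  In case (ii) a maximum principle for
   (a u')' = b G'(u) first confines u(x1) to [-M, M], and the intermediate value
   theorem yields such a y with u(y) = +-M, so again G(u(x1)) = min G.  Hence
   G'(u(x1)) = 0, and since G' is locally Lipschitz, Gronwall's lemma applied to
   (u - u(x1))^2 + (a u')^2 forces u' = 0 everywhere, contradicting the mean value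
   theorem for u(L) - u(-L) = 2m.  So u' never vanishes, a u' keeps the sign it
   has at some point, and u' > 0. *)

From Stdlib Require Import Reals Lra.
Open Scope R_scope.

Lemma continuity_pt_of_derivable_pt_lim f x l :
  derivable_pt_lim f x l -> continuity_pt f x.
Proof. intros H. exact (derivable_continuous_pt f x (exist _ l H)). Qed.

Lemma MVT_open f df x y :
  x < y ->
  (forall t, x <= t <= y -> continuity_pt f t) ->
  (forall t, x < t < y -> derivable_pt_lim f t (df t)) ->
  exists c, x < c < y /\ f y - f x = df c * (y - x).
Proof.
  intros Hxy Hc Hd.
  assert (pr_f : forall c, x < c < y -> derivable_pt f c)
    by (intros c Hc'; exists (df c); exact (Hd c Hc')).
  assert (pr_id : forall c, x < c < y -> derivable_pt id c)
    by (intros; apply derivable_pt_id).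
  destruct (MVT f id x y pr_f pr_id Hxy Hc) as [c [P HP]].
  { intros; apply derivable_continuous_pt, derivable_pt_id. }
  rewrite (derive_pt_eq_0 _ _ _ _ (Hd c P)),
    (derive_pt_eq_0 _ _ _ _ (derivable_pt_lim_id c)) in HP.
  exists c; split; [exact P|]. unfold id in HP. lra.
Qed.

Lemma Rle_of_deriv_nonneg f df x y :
  x <= y ->
  (forall t, x <= t <= y -> continuity_pt f t) ->
  (forall t, x < t < y -> derivable_pt_lim f t (df t)) ->
  (forall t, x < t < y -> 0 <= df t) -> f x <= f y.
Proof.
  intros Hxy Hc Hd Hs. destruct (Req_dec x y) as [<-|Hne]; [lra|].
  destruct (MVT_open f df x y) as [c [Hc' E]]; [lra|exact Hc|exact Hd|].
  specialize (Hs c Hc'). nra.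
Qed.

Lemma Rle_of_deriv_nonpos f df x y :
  x <= y ->
  (forall t, x <= t <= y -> continuity_pt f t) ->
  (forall t, x < t < y -> derivable_pt_lim f t (df t)) ->
  (forall t, x < t < y -> df t <= 0) -> f y <= f x.
Proof.
  intros Hxy Hc Hd Hs.
  enough ((- f)%F x <= (- f)%F y) by (unfold opp_fct in *; lra).
  apply (Rle_of_deriv_nonneg _ (fun t => - df t)); [exact Hxy| | |].
  - intros t Ht; apply continuity_pt_opp, Hc, Ht.
  - intros t Ht; apply derivable_pt_lim_opp, Hd, Ht.
  - intros t Ht; specialize (Hs t Ht); lra.
Qed.

Lemma Rlt_of_deriv_pos f df x y :
  x < y ->
  (forall t, x <= t <= y -> continuity_pt f t) ->
  (forall t, x < t < y -> derivable_pt_lim f t (df t)) ->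
  (forall t, x < t < y -> 0 < df t) -> f x < f y.
Proof.
  intros Hxy Hc Hd Hs.
  destruct (MVT_open f df x y) as [c [Hc' E]]; [exact Hxy|exact Hc|exact Hd|].
  specialize (Hs c Hc'). nra.
Qed.

Lemma Rle_of_continuity_pt_left f x s K :
  continuity_pt f x -> s < x -> (forall t, s < t < x -> K <= f t) -> K <= f x.
Proof.
  intros Hc Hs Hb. apply Rnot_lt_le; intros Hlt.
  destruct (Hc (K - f x)) as [d [Hd Hnear]]; [lra|].
  assert (Hmin : 0 < Rmin d (x - s) <= d /\ Rmin d (x - s) <= x - s).
  { split; [split; [apply Rmin_glb_lt; lra|apply Rmin_l]|apply Rmin_r]. }
  set (t := x - Rmin d (x - s) / 2).
  assert (Hclose : Rabs (f t - f x) < K - f x).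
  { apply Hnear. split; [split; [exact I|unfold t; lra]|].
    simpl; unfold R_dist, t. rewrite Rabs_left; lra. }
  apply Rabs_def2 in Hclose. specialize (Hb t ltac:(unfold t; lra)). lra.
Qed.

Lemma Rle_of_continuity_pt_right f x s K :
  continuity_pt f x -> x < s -> (forall t, x < t < s -> K <= f t) -> K <= f x.
Proof.
  intros Hc Hs Hb. apply Rnot_lt_le; intros Hlt.
  destruct (Hc (K - f x)) as [d [Hd Hnear]]; [lra|].
  assert (Hmin : 0 < Rmin d (s - x) <= d /\ Rmin d (s - x) <= s - x).
  { split; [split; [apply Rmin_glb_lt; lra|apply Rmin_l]|apply Rmin_r]. }
  set (t := x + Rmin d (s - x) / 2).
  assert (Hclose : Rabs (f t - f x) < K - f x).
  { apply Hnear. split; [split; [exact I|unfold t; lra]|].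
    simpl; unfold R_dist, t. rewrite Rabs_right; lra. }
  apply Rabs_def2 in Hclose. specialize (Hb t ltac:(unfold t; lra)). lra.
Qed.

Lemma last_crossing f lo hi K :
  continuity f -> lo < hi -> f lo <= K -> K < f hi ->
  exists p, lo <= p < hi /\ f p <= K /\ forall t, p < t <= hi -> K < f t.
Proof.
  intros Hc Hlh Hlo Hhi.
  set (S := fun y => lo <= y <= hi /\ f y <= K).
  destruct (completeness S) as [p [Hub Hleast]].
  { exists hi; intros y [Hy _]; lra. }
  { exists lo; split; [lra|exact Hlo]. }
  assert (Hlop : lo <= p) by (apply Hub; split; [lra|exact Hlo]).
  assert (Hphi : p <= hi) by (apply Hleast; intros y [Hy _]; lra).
  assert (Hfp : f p <= K).
  { apply Rnot_lt_le; intros Hlt.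
    destruct (Hc p (f p - K)) as [d [Hd Hnear]]; [lra|].
    enough (p <= p - d) by lra.
    apply Hleast; intros y [Hy Hfy]. apply Rnot_lt_le; intros Hyd.
    assert (Hyp : y <= p) by (apply Hub; split; assumption).
    destruct (Req_dec y p) as [->|Hne]; [lra|].
    assert (Hclose : Rabs (f y - f p) < f p - K).
    { apply Hnear. split; [split; [exact I|auto]|].
      simpl; unfold R_dist. rewrite Rabs_left; lra. }
    apply Rabs_def2 in Hclose. lra. }
  exists p. split; [split; [exact Hlop|]|split; [exact Hfp|]].
  - destruct (Req_dec p hi) as [->|]; lra.
  - intros t Ht. apply Rnot_le_lt; intros Hft.
    assert (t <= p) by (apply Hub; split; [lra|exact Hft]). lra.
Qed.

Lemma first_crossing f lo hi K :
  continuity f -> lo < hi -> f lo < K -> K <= f hi ->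
  exists q, lo < q <= hi /\ K <= f q /\ forall t, lo <= t < q -> f t < K.
Proof.
  intros Hc Hlh Hlo Hhi.
  destruct (last_crossing (fun t => - f (- t)) (- hi) (- lo) (- K))
    as [p [Hp [Hfp Hafter]]]; rewrite ?Ropp_involutive; try lra.
  { intros t. apply (continuity_pt_opp (fun t => f (- t))).
    apply (continuity_pt_comp Ropp f), Hc.
    apply continuity_pt_opp, derivable_continuous_pt, derivable_pt_id. }
  exists (- p). split; [lra|split; [lra|]].
  intros t Ht. specialize (Hafter (- t) ltac:(lra)).
  rewrite Ropp_involutive in Hafter. lra.
Qed.

Lemma continuous_nonvanishing_pos f lo hi s :
  (forall t, lo < t < hi -> continuity_pt f t) ->
  (forall t, lo < t < hi -> f t <> 0) ->
  lo < s < hi -> 0 < f s -> forall t, lo < t < hi -> 0 < f t.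
Proof.
  intros Hc Hnz Hs Hfs t Ht. apply Rnot_le_lt; intros Hft.
  assert (Hneg : f t < 0) by (specialize (Hnz t Ht); lra).
  destruct (Rtotal_order t s) as [Hts|[->|Hst]]; [|lra|].
  - destruct (Ranalysis5.IVT_interv f t s) as [z [Hz Hfz]]; try lra.
    + intros y Hy; apply Hc; lra.
    + exact (Hnz z ltac:(lra) Hfz).
  - destruct (Ranalysis5.IVT_interv (- f)%F s t) as [z [Hz Hfz]]; unfold opp_fct; try lra.
    + intros y Hy; apply continuity_pt_opp, Hc; lra.
    + unfold opp_fct in Hfz. apply (Hnz z ltac:(lra)); lra.
Qed.

Lemma derivable_pt_lim_global_min f x l :
  derivable_pt_lim f x l -> (forall s, f x <= f s) -> l = 0.
Proof.
  intros Hd Hmin.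
  rewrite <- (derive_pt_eq_0 f x l (exist _ l Hd) Hd).
  apply (deriv_minimum f (x - 1) (x + 1)); [lra|lra|intros; apply Hmin].
Qed.

Lemma global_min_of_monotone_tails G g M :
  (forall s, derivable_pt_lim G s (g s)) ->
  G (- M) = G M ->
  (forall s, - M <= s <= M -> G M <= G s) ->
  (forall s, s < - M -> g s <= 0) -> (forall s, M < s -> 0 <= g s) ->
  forall s, G M <= G s.
Proof.
  intros HG Hsym Hmid Hleft Hright s.
  assert (HGc : forall t, continuity_pt G t)
    by (intros t; exact (continuity_pt_of_derivable_pt_lim _ _ _ (HG t))).
  destruct (Rlt_dec M s) as [Hs|Hs].
  { apply (Rle_of_deriv_nonneg G g); auto; [lra|intros t Ht; apply Hright; lra]. }
  destruct (Rlt_dec s (- M)) as [Hs'|Hs']; [|apply Hmid; lra].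
  rewrite <- Hsym. apply (Rle_of_deriv_nonpos G g); auto; [lra|intros t Ht; apply Hleft; lra].
Qed.

Lemma derivable_pt_lim_mult_exp f df k t :
  derivable_pt_lim f t df ->
  derivable_pt_lim (fun y => f y * exp (k * y)) t ((df + k * f t) * exp (k * t)).
Proof.
  intros Hf.
  assert (Hexp : derivable_pt_lim (fun y => exp (k * y)) t (exp (k * t) * k)).
  { apply (derivable_pt_lim_comp (fun y => k * y) exp t k).
    - pose proof (derivable_pt_lim_scal id k t 1 (derivable_pt_lim_id t)) as Hlin.
      rewrite Rmult_1_r in Hlin. exact Hlin.
    - apply derivable_pt_lim_exp. }
  replace ((df + k * f t) * exp (k * t)) with (df * exp (k * t) + f t * (exp (k * t) * k)) by ring.
  exact (derivable_pt_lim_mult f (fun y => exp (k * y)) t _ _ Hf Hexp).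
Qed.

Lemma gronwall_zero Phi dPhi K p q x :
  (forall t, p <= t <= q -> derivable_pt_lim Phi t (dPhi t)) ->
  (forall t, p <= t <= q -> 0 <= Phi t) ->
  (forall t, p <= t <= q -> Rabs (dPhi t) <= K * Phi t) ->
  p <= x <= q -> Phi x = 0 -> forall y, p <= y <= q -> Phi y = 0.
Proof.
  intros Hd Hnn Hbound Hx HPhix y Hy.
  assert (Hw : forall k t, p <= t <= q ->
    derivable_pt_lim (fun y => Phi y * exp (k * y)) t ((dPhi t + k * Phi t) * exp (k * t)))
    by (intros k t Ht; apply derivable_pt_lim_mult_exp, Hd, Ht).
  assert (Hwc : forall k t, p <= t <= q -> continuity_pt (fun y => Phi y * exp (k * y)) t)
    by (intros k t Ht; exact (continuity_pt_of_derivable_pt_lim _ _ _ (Hw k t Ht))).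
  pose proof (Hnn y Hy) as Hy0.
  destruct (Rle_dec x y) as [Hxy|Hxy].
  - assert (Hdecay : Phi y * exp (- K * y) <= Phi x * exp (- K * x)).
    { apply (Rle_of_deriv_nonpos (fun t => Phi t * exp (- K * t))
        (fun t => (dPhi t + - K * Phi t) * exp (- K * t)));
        [lra|intros t Ht; apply Hwc; lra|intros t Ht; apply Hw; lra|].
      intros t Ht. pose proof (exp_pos (- K * t)).
      assert (dPhi t <= K * Phi t) by (eapply Rle_trans; [apply Rle_abs|apply Hbound; lra]).
      nra. }
    rewrite HPhix in Hdecay. pose proof (exp_pos (- K * y)). nra.
  - assert (Hgrowth : Phi y * exp (K * y) <= Phi x * exp (K * x)).
    { apply (Rle_of_deriv_nonneg (fun t => Phi t * exp (K * t))
        (fun t => (dPhi t + K * Phi t) * exp (K * t)));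
        [lra|intros t Ht; apply Hwc; lra|intros t Ht; apply Hw; lra|].
      intros t Ht. pose proof (exp_pos (K * t)).
      assert (- dPhi t <= K * Phi t)
        by (apply (Rle_trans _ (Rabs (dPhi t)));
            [rewrite <- Rabs_Ropp; apply Rle_abs|apply Hbound; lra]).
      nra. }
    rewrite HPhix in Hgrowth. pose proof (exp_pos (K * y)). nra.
Qed.

Lemma Rabs_cross_terms_le X Y ia ia_max bt bmax gam C :
  0 <= ia <= ia_max -> 0 <= bt <= bmax -> 0 <= C -> Rabs gam <= C * Rabs X ->
  Rabs (2 * X * (ia * Y) + 2 * Y * (bt * gam)) <= (ia_max + bmax * C) * (X ^ 2 + Y ^ 2).
Proof.
  intros Hia Hbt HC Hgam.
  assert (Hsq : 2 * Rabs X * Rabs Y <= X ^ 2 + Y ^ 2).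
  { rewrite <- (pow2_abs X), <- (pow2_abs Y). pose proof (pow2_ge_0 (Rabs X - Rabs Y)). nra. }
  pose proof (Rabs_pos X). pose proof (Rabs_pos Y). pose proof (Rabs_pos gam).
  eapply Rle_trans; [apply Rabs_triang|].
  rewrite !Rabs_mult, (Rabs_right 2), (Rabs_right ia), (Rabs_right bt) by lra.
  assert (Rabs Y * (bt * Rabs gam) <= Rabs Y * (bmax * (C * Rabs X))).
  { apply Rmult_le_compat_l; [lra|]. apply Rmult_le_compat; lra. }
  assert (Rabs X * (ia * Rabs Y) <= ia_max * (Rabs X * Rabs Y)).
  { replace (Rabs X * (ia * Rabs Y)) with (ia * (Rabs X * Rabs Y)) by ring.
    apply Rmult_le_compat_r; [apply Rmult_le_pos|]; lra. }
  assert (0 <= bmax * C) by nra.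
  nra.
Qed.

(* Extending a function constantly outside [lo, hi] turns continuity on the
   closed interval into continuity on R, so endpoints need no special care. *)
Definition clamp (lo hi t : R) : R := Rmax lo (Rmin hi t).

Lemma clamp_id lo hi t : lo <= t <= hi -> clamp lo hi t = t.
Proof. intros Ht. unfold clamp. rewrite Rmin_right, Rmax_right; lra. Qed.

Lemma clamp_range lo hi t : lo <= hi -> lo <= clamp lo hi t <= hi.
Proof. intros H. unfold clamp, Rmax, Rmin. repeat destruct Rle_dec; lra. Qed.

Lemma Rabs_clamp_le lo hi s t :
  lo <= hi -> Rabs (clamp lo hi s - clamp lo hi t) <= Rabs (s - t).
Proof.
  intros H. unfold clamp, Rmax, Rmin, Rabs.
  repeat (destruct Rle_dec); repeat (destruct Rcase_abs); lra.
Qed.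

Lemma continuity_clamp_comp f lo hi :
  lo <= hi -> cont_on_closed f lo hi -> continuity (fun t => f (clamp lo hi t)).
Proof.
  intros Hlh Hf t eps Heps.
  destruct (Hf (clamp lo hi t) (clamp_range lo hi t Hlh) eps Heps) as [d [Hd Hnear]].
  exists d; split; [exact Hd|]. intros s [_ Hs].
  apply Hnear. split; [apply clamp_range, Hlh|].
  eapply Rle_lt_trans; [apply Rabs_clamp_le, Hlh|exact Hs].
Qed.

Section Solution.

Variables (L : R) (a da b db G g U du : R -> R).

Hypothesis L_pos : 0 < L.
Hypothesis U_cont : continuity U.
Hypothesis U_deriv : forall t, -L < t < L -> derivable_pt_lim U t (du t).
Hypothesis flux_deriv :
  forall t, -L < t < L -> derivable_pt_lim (fun y => a y * du y) t (b t * g (U t)).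
Hypothesis a_deriv : forall t, -L < t < L -> derivable_pt_lim a t (da t).
Hypothesis b_deriv : forall t, -L < t < L -> derivable_pt_lim b t (db t).
Hypothesis a_pos : forall t, -L < t < L -> 0 < a t.
Hypothesis b_pos : forall t, -L < t < L -> 0 < b t.
Hypothesis G_deriv : forall s, derivable_pt_lim G s (g s).

Lemma flux_continuous t : -L < t < L -> continuity_pt (fun y => a y * du y) t.
Proof. intros Ht. exact (continuity_pt_of_derivable_pt_lim _ _ _ (flux_deriv t Ht)). Qed.

Lemma potential_continuous : continuity (fun t => G (U t)).
Proof.
  intros t. apply (continuity_pt_comp U G), continuity_pt_of_derivable_pt_lim with (g (U t)).
  - apply U_cont.
  - apply G_deriv.
Qed.

Definition energy (t : R) : R := (a t * du t) ^ 2 / (a t * b t) - 2 * G (U t).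

Lemma energy_deriv t : -L < t < L ->
  derivable_pt_lim energy t
    (- (da t * b t + a t * db t) * (du t / b t) ^ 2).
Proof.
  intros Ht. pose proof (a_pos t Ht). pose proof (b_pos t Ht).
  set (W := fun y => a y * du y).
  assert (HW2 := derivable_pt_lim_mult W W t _ _ (flux_deriv t Ht) (flux_deriv t Ht)).
  assert (Hab := derivable_pt_lim_mult a b t _ _ (a_deriv t Ht) (b_deriv t Ht)).
  assert (Hq := derivable_pt_lim_div _ _ t _ _ HW2 Hab ltac:(unfold mult_fct; nra)).
  assert (HGU := derivable_pt_lim_comp U G t _ _ (U_deriv t Ht) (G_deriv (U t))).
  assert (HE := derivable_pt_lim_minus _ _ t _ _ Hq (derivable_pt_lim_scal _ 2 t _ HGU)).
  replace (- (da t * b t + a t * db t) * (du t / b t) ^ 2) with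
    (((b t * g (U t) * W t + W t * (b t * g (U t))) * (a * b)%F t -
      (da t * b t + a t * db t) * (W * W)%F t) / ((a * b)%F t)² -
     2 * (g (U t) * du t)).
  - refine (derivable_pt_lim_locally_ext _ energy t (-L) L _ Ht _ HE).
    intros z _. unfold energy, W, minus_fct, div_fct, mult_fct, mult_real_fct, comp, Rdiv. ring.
  - unfold W, mult_fct, Rsqr. field. lra.
Qed.

Lemma energy_ge t : -L < t < L -> - 2 * G (U t) <= energy t.
Proof.
  intros Ht. pose proof (a_pos t Ht). pose proof (b_pos t Ht).
  assert (0 <= (a t * du t) ^ 2 / (a t * b t)).
  { unfold Rdiv. apply Rmult_le_pos; [apply pow2_ge_0|apply Rlt_le, Rinv_0_lt_compat; nra]. }
  unfold energy. lra.
Qed.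

Lemma energy_at_critical t : du t = 0 -> energy t = - 2 * G (U t).
Proof. intros Hdu. unfold energy. rewrite Hdu. unfold Rdiv. ring. Qed.

Variable x0 : R.
Hypothesis ab_deriv_nonpos :
  forall t, -L < t < L -> t <= x0 -> da t * b t + a t * db t <= 0.
Hypothesis ab_deriv_nonneg :
  forall t, -L < t < L -> x0 <= t -> 0 <= da t * b t + a t * db t.

Lemma energy_nonincreasing s t : -L < s -> x0 <= s -> s <= t -> t < L -> energy t <= energy s.
Proof.
  intros. apply (Rle_of_deriv_nonpos energy
    (fun y => - (da y * b y + a y * db y) * (du y / b y) ^ 2)); [lra| | |].
  - intros y Hy. exact (continuity_pt_of_derivable_pt_lim _ _ _ (energy_deriv y ltac:(lra))).
  - intros y Hy. apply energy_deriv; lra.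
  - intros y Hy. pose proof (ab_deriv_nonneg y ltac:(lra) ltac:(lra)).
    pose proof (pow2_ge_0 (du y / b y)). nra.
Qed.

Lemma energy_nondecreasing s t : -L < s -> s <= t -> t <= x0 -> t < L -> energy s <= energy t.
Proof.
  intros. apply (Rle_of_deriv_nonneg energy
    (fun y => - (da y * b y + a y * db y) * (du y / b y) ^ 2)); [lra| | |].
  - intros y Hy. exact (continuity_pt_of_derivable_pt_lim _ _ _ (energy_deriv y ltac:(lra))).
  - intros y Hy. apply energy_deriv; lra.
  - intros y Hy. pose proof (ab_deriv_nonpos y ltac:(lra) ltac:(lra)).
    pose proof (pow2_ge_0 (du y / b y)). nra.
Qed.

Lemma critical_value_le_right x1 : -L < x1 < L -> x0 <= x1 -> du x1 = 0 ->
  forall y, x1 <= y <= L -> G (U x1) <= G (U y).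
Proof.
  intros Hx1 Hx01 Hdu.
  assert (Hinner : forall y, x1 <= y < L -> G (U x1) <= G (U y)).
  { intros y Hy. pose proof (energy_nonincreasing x1 y ltac:(lra) Hx01 ltac:(lra) ltac:(lra)).
    pose proof (energy_ge y ltac:(lra)). pose proof (energy_at_critical x1 Hdu). lra. }
  intros y Hy. destruct (Req_dec y L) as [->|Hne]; [|apply Hinner; lra].
  apply (Rle_of_continuity_pt_left (fun t => G (U t)) L x1);
    [apply potential_continuous|lra|intros t Ht; apply Hinner; lra].
Qed.

Lemma critical_value_le_left x1 : -L < x1 < L -> x1 <= x0 -> du x1 = 0 ->
  forall y, -L <= y <= x1 -> G (U x1) <= G (U y).
Proof.
  intros Hx1 Hx01 Hdu.
  assert (Hinner : forall y, -L < y <= x1 -> G (U x1) <= G (U y)).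
  { intros y Hy. pose proof (energy_nondecreasing y x1 ltac:(lra) ltac:(lra) Hx01 ltac:(lra)).
    pose proof (energy_ge y ltac:(lra)). pose proof (energy_at_critical x1 Hdu). lra. }
  intros y Hy. destruct (Req_dec y (-L)) as [->|Hne]; [|apply Hinner; lra].
  apply (Rle_of_continuity_pt_right (fun t => G (U t)) (-L) x1);
    [apply potential_continuous|lra|intros t Ht; apply Hinner; lra].
Qed.

Lemma critical_value_le_level K x1 : (forall s, K < s -> 0 <= g s) -> U (-L) <= K ->
  -L < x1 < L -> du x1 = 0 -> U x1 <= K.
Proof.
  intros Hg HK Hx1 Hdu. apply Rnot_lt_le; intros Hc.
  destruct (last_crossing U (-L) x1 K U_cont) as [p [Hp [Hfp Habove]]]; try lra.
  (* On (p, x1] we have u > K, so (a u')' >= 0 and a u' <= (a u')(x1) = 0. *)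
  assert (Hdecr : forall t, p < t < x1 -> du t <= 0).
  { intros t Ht.
    assert (Hflux : a t * du t <= a x1 * du x1).
    { apply (Rle_of_deriv_nonneg (fun y => a y * du y) (fun y => b y * g (U y))); [lra| | |].
      - intros y Hy; apply flux_continuous; lra.
      - intros y Hy; apply flux_deriv; lra.
      - intros y Hy. apply Rmult_le_pos; [apply Rlt_le, b_pos; lra|apply Hg, Habove; lra]. }
    rewrite Hdu, Rmult_0_r in Hflux. pose proof (a_pos t ltac:(lra)). nra. }
  assert (U x1 <= U p).
  { apply (Rle_of_deriv_nonpos U du p x1); [lra|intros; apply U_cont| |exact Hdecr].
    intros t Ht; apply U_deriv; lra. }
  lra.
Qed.

Lemma critical_value_ge_level K x1 : (forall s, s < K -> g s <= 0) -> K <= U L ->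
  -L < x1 < L -> du x1 = 0 -> K <= U x1.
Proof.
  intros Hg HK Hx1 Hdu. apply Rnot_lt_le; intros Hc.
  destruct (first_crossing U x1 L K U_cont) as [q [Hq [Hfq Hbelow]]]; try lra.
  assert (Hdecr : forall t, x1 < t < q -> du t <= 0).
  { intros t Ht.
    assert (Hflux : a t * du t <= a x1 * du x1).
    { apply (Rle_of_deriv_nonpos (fun y => a y * du y) (fun y => b y * g (U y))); [lra| | |].
      - intros y Hy; apply flux_continuous; lra.
      - intros y Hy; apply flux_deriv; lra.
      - intros y Hy. pose proof (b_pos y ltac:(lra)). pose proof (Hg (U y) (Hbelow y ltac:(lra))).
        nra. }
    rewrite Hdu, Rmult_0_r in Hflux. pose proof (a_pos t ltac:(lra)). nra. }
  assert (U q <= U x1).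
  { apply (Rle_of_deriv_nonpos U du x1 q); [lra|intros; apply U_cont| |exact Hdecr].
    intros t Ht; apply U_deriv; lra. }
  lra.
Qed.

Definition deviation (c t : R) : R := (U t - c) ^ 2 + (a t * du t) ^ 2.

Lemma deviation_deriv c t : -L < t < L ->
  derivable_pt_lim (deviation c) t
    (2 * (U t - c) * du t + 2 * (a t * du t) * (b t * g (U t))).
Proof.
  intros Ht.
  assert (Hshift := derivable_pt_lim_minus U (fct_cte c) t _ _ (U_deriv t Ht)
    (derivable_pt_lim_const c t)).
  assert (H := derivable_pt_lim_plus _ _ t _ _
    (derivable_pt_lim_mult _ _ t _ _ Hshift Hshift)
    (derivable_pt_lim_mult _ _ t _ _ (flux_deriv t Ht) (flux_deriv t Ht))).
  replace (2 * (U t - c) * du t + 2 * (a t * du t) * (b t * g (U t))) with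
    ((du t - 0) * (U - fct_cte c)%F t + (U - fct_cte c)%F t * (du t - 0) +
     (b t * g (U t) * (a t * du t) + a t * du t * (b t * g (U t))))
    by (unfold minus_fct, fct_cte; ring).
  refine (derivable_pt_lim_locally_ext _ _ t (-L) L _ Ht _ H).
  intros z _. unfold deviation, plus_fct, mult_fct, minus_fct, fct_cte. ring.
Qed.

Hypothesis g_lipschitz : forall K, 0 < K -> exists C, forall x y,
  Rabs x <= K -> Rabs y <= K -> Rabs (g x - g y) <= C * Rabs (x - y).

Lemma deviation_deriv_bound p q x1 : -L < p -> p <= x1 <= q -> q < L -> g (U x1) = 0 ->
  exists K, forall t, p <= t <= q ->
    Rabs (2 * (U t - U x1) * du t + 2 * (a t * du t) * (b t * g (U t)))
      <= K * deviation (U x1) t.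
Proof.
  intros Hp Hx1 Hq Hg0.
  assert (Hin : forall t, p <= t <= q -> -L < t < L) by (intros; lra).
  assert (Hpq : p <= q) by lra.
  destruct (continuity_ab_min a p q Hpq) as [ta [Hamin Hta]].
  { intros t Ht. exact (continuity_pt_of_derivable_pt_lim _ _ _ (a_deriv t (Hin t Ht))). }
  destruct (continuity_ab_maj b p q Hpq) as [tb [Hbmax Htb]].
  { intros t Ht. exact (continuity_pt_of_derivable_pt_lim _ _ _ (b_deriv t (Hin t Ht))). }
  destruct (continuity_ab_maj (fun t => Rabs (U t)) p q Hpq) as [tu [Humax Htu]].
  { intros t _. apply (continuity_pt_comp U Rabs); [apply U_cont|apply Rcontinuity_abs]. }
  destruct (g_lipschitz (Rabs (U tu) + 1)) as [C HC]; [pose proof (Rabs_pos (U tu)); lra|].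
  exists (/ a ta + b tb * Rabs C). intros t Ht.
  pose proof (a_pos t (Hin t Ht)). pose proof (a_pos ta (Hin ta Hta)).
  pose proof (b_pos t (Hin t Ht)).
  replace (2 * (U t - U x1) * du t) with (2 * (U t - U x1) * (/ a t * (a t * du t)))
    by (field; lra).
  unfold deviation. apply Rabs_cross_terms_le.
  - split; [apply Rlt_le, Rinv_0_lt_compat; lra|apply Rinv_le_contravar; [lra|apply Hamin, Ht]].
  - split; [lra|apply Hbmax, Ht].
  - apply Rabs_pos.
  - replace (g (U t)) with (g (U t) - g (U x1)) by (rewrite Hg0; ring).
    eapply Rle_trans; [apply HC; [pose proof (Humax t Ht)|pose proof (Humax x1 Hx1)]; lra|].
    apply Rmult_le_compat_r; [apply Rabs_pos|apply Rle_abs].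
Qed.

Lemma critical_equilibrium x1 : -L < x1 < L -> du x1 = 0 -> g (U x1) = 0 ->
  forall y, -L < y < L -> du y = 0.
Proof.
  intros Hx1 Hdu Hg0 y Hy.
  set (p := Rmin x1 y). set (q := Rmax x1 y).
  assert (Hp : p <= x1 /\ p <= y /\ -L < p)
    by (unfold p; split; [apply Rmin_l|split; [apply Rmin_r|apply Rmin_glb_lt; lra]]).
  assert (Hq : x1 <= q /\ y <= q /\ q < L)
    by (unfold q; split; [apply Rmax_l|split; [apply Rmax_r|apply Rmax_lub_lt; lra]]).
  destruct (deviation_deriv_bound p q x1) as [K HK]; try lra.
  assert (Hzero : deviation (U x1) y = 0).
  { apply (gronwall_zero (deviation (U x1))
      (fun t => 2 * (U t - U x1) * du t + 2 * (a t * du t) * (b t * g (U t))) K p q x1);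
      try lra; [| |exact HK|].
    - intros t Ht. apply deviation_deriv. lra.
    - intros t _. unfold deviation. pose proof (pow2_ge_0 (U t - U x1)).
      pose proof (pow2_ge_0 (a t * du t)). lra.
    - unfold deviation. rewrite Hdu. ring. }
  unfold deviation in Hzero. pose proof (a_pos y Hy).
  pose proof (pow2_ge_0 (U y - U x1)). pose proof (pow2_ge_0 (a y * du y)).
  assert (Hflux : a y * du y = 0) by nra.
  apply Rmult_integral in Hflux. destruct Hflux; lra.
Qed.

Variable m : R.
Hypothesis m_pos : 0 < m.
Hypothesis U_right_end : U L = m.
Hypothesis U_left_end : U (-L) = - m.

Lemma exists_pos_slope : exists xi, -L < xi < L /\ 0 < du xi.
Proof.
  destruct (MVT_open U du (-L) L) as [xi [Hxi Hslope]]; [lra|intros; apply U_cont|exact U_deriv|].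
  exists xi; split; [exact Hxi|]. rewrite U_right_end, U_left_end in Hslope. nra.
Qed.

Lemma critical_value_min_sym x1 : G (- m) = G m -> (forall s, G m <= G s) ->
  -L < x1 < L -> du x1 = 0 -> forall s, G (U x1) <= G s.
Proof.
  intros Hsym Hmin Hx1 Hdu s. eapply Rle_trans; [|apply (Hmin s)].
  destruct (Rle_dec x0 x1) as [Hx01|Hx01].
  - rewrite <- U_right_end. apply critical_value_le_right; lra.
  - rewrite <- Hsym, <- U_left_end. apply critical_value_le_left; lra.
Qed.

Lemma critical_value_min_tails x1 M : 0 < M <= m -> G (- M) = G M ->
  (forall s, - M <= s <= M -> G M <= G s) ->
  (forall s, s < - M -> g s <= 0) -> (forall s, M < s -> 0 <= g s) ->
  -L < x1 < L -> du x1 = 0 -> forall s, G (U x1) <= G s.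
Proof.
  intros HM Hsym Hmid Hleft Hright Hx1 Hdu s.
  eapply Rle_trans; [|apply (global_min_of_monotone_tails G g M G_deriv Hsym Hmid Hleft Hright)].
  assert (Hle : U x1 <= M).
  { apply critical_value_le_level; [exact Hright|rewrite U_left_end; lra|exact Hx1|exact Hdu]. }
  assert (Hge : - M <= U x1).
  { apply critical_value_ge_level; [exact Hleft|rewrite U_right_end; lra|exact Hx1|exact Hdu]. }
  destruct (Rle_dec x0 x1) as [Hx01|Hx01].
  - destruct (IVT_cor (fun t => U t - M) x1 L) as [z [Hz HUz]]; [| |rewrite U_right_end; nra|].
    + change (continuity (U - fct_cte M)%F).
      apply continuity_minus; [exact U_cont|apply continuity_const; intros ? ?; reflexivity].
    + lra.
    + replace M with (U z) by lra. apply critical_value_le_right; lra.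
  - destruct (IVT_cor (fun t => U t + M) (-L) x1) as [z [Hz HUz]]; [| |rewrite U_left_end; nra|].
    + change (continuity (U + fct_cte M)%F).
      apply continuity_plus; [exact U_cont|apply continuity_const; intros ? ?; reflexivity].
    + lra.
    + rewrite <- Hsym. replace (- M) with (U z) by lra. apply critical_value_le_left; lra.
Qed.

Hypothesis G_shape :
  (G (- m) = G m /\ forall s, G m <= G s)
  \/
  (exists M, 0 < M <= m /\ G (- M) = G M /\
     (forall s, - M <= s <= M -> G M <= G s) /\
     (forall s, s < - M -> g s <= 0) /\
     (forall s, M < s -> 0 <= g s)).

Lemma no_critical_point x1 : -L < x1 < L -> du x1 <> 0.
Proof.
  intros Hx1 Hdu.
  assert (Hmin : forall s, G (U x1) <= G s).
  { destruct G_shape as [[Hsym Hmin] | [M [HM [Hsym [Hmid [Hleft Hright]]]]]].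
    - exact (critical_value_min_sym x1 Hsym Hmin Hx1 Hdu).
    - exact (critical_value_min_tails x1 M HM Hsym Hmid Hleft Hright Hx1 Hdu). }
  assert (Hg0 : g (U x1) = 0) by exact (derivable_pt_lim_global_min G _ _ (G_deriv (U x1)) Hmin).
  destruct exists_pos_slope as [xi [Hxi Hpos]].
  pose proof (critical_equilibrium x1 Hx1 Hdu Hg0 xi Hxi). lra.
Qed.

Lemma slope_pos t : -L < t < L -> 0 < du t.
Proof.
  intros Ht. destruct exists_pos_slope as [xi [Hxi Hpos]].
  assert (Hflux : 0 < a t * du t).
  { apply (continuous_nonvanishing_pos (fun y => a y * du y) (-L) L xi);
      [exact flux_continuous| |exact Hxi| |exact Ht].
    - intros y Hy. apply Rmult_integral_contrapositive_currified;
        [apply Rgt_not_eq, a_pos, Hy|apply no_critical_point, Hy].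
    - pose proof (a_pos xi Hxi). nra. }
  pose proof (a_pos t Ht). nra.
Qed.

Lemma solution_increasing x y : -L <= x -> x < y -> y <= L -> U x < U y.
Proof.
  intros Hx Hxy Hy. apply (Rlt_of_deriv_pos U du x y Hxy); [intros; apply U_cont| |].
  - intros t Ht. apply U_deriv. lra.
  - intros t Ht. apply slope_pos. lra.
Qed.

End Solution.

Theorem theorem1p9 (L : R) (a da b db G g : R -> R) (x0 m : R) :
  0 < L ->
  C1_closed a da (-L) L -> C1_closed b db (-L) L ->
  (forall x, -L <= x <= L -> 0 < a x) ->
  (forall x, -L <= x <= L -> 0 < b x) ->
  C11_loc G g ->
  -L <= x0 <= L ->
  (* (ab)' = a' b + a b' <= 0 on (-L, x0] and >= 0 on [x0, L) *)
  (forall x, -L < x <= x0 -> x <= L -> da x * b x + a x * db x <= 0) ->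
  (forall x, x0 <= x < L -> -L <= x -> 0 <= da x * b x + a x * db x) ->
  0 < m ->
  ( (G (- m) = G m /\ forall s, G m <= G s)
    \/
    (exists M, 0 < M <= m /\ G (- M) = G M /\
       (forall s, - M <= s <= M -> G M <= G s) /\
       (forall s, s < - M -> g s <= 0) /\
       (forall s, M < s -> 0 <= g s)) ) ->
  forall u du : R -> R,
    is_solution a b (fun s => - g s) L m u du ->
    forall x y, -L <= x -> x < y -> y <= L -> u x < u y.
Proof.
  intros HL [_ [_ Hda]] [_ [_ Hdb]] Ha Hb [HG Hlip] _ Hneg Hpos Hm Hshape u du
    [Hu [Hdu [Hflux [HuL HuL']]]] x y Hx Hxy Hy.
  set (U := fun t => u (clamp (-L) L t)).
  assert (HU : forall t, -L <= t <= L -> U t = u t)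
    by (intros t Ht; unfold U; rewrite clamp_id by exact Ht; reflexivity).
  rewrite <- (HU x), <- (HU y) by lra.
  refine (solution_increasing L a da b db G g U du HL _ _ _ Hda Hdb _ _ HG x0 _ _ Hlip
    m Hm _ _ Hshape x y Hx Hxy Hy).
  - apply continuity_clamp_comp; [lra|exact Hu].
  - intros t Ht. apply (derivable_pt_lim_locally_ext u U t (-L) L); [exact Ht| |apply Hdu, Ht].
    intros z Hz. symmetry. apply HU. lra.
  - intros t Ht. rewrite HU by lra. replace (b t * g (u t)) with (- (b t * - g (u t))) by ring.
    apply Hflux, Ht.
  - intros t Ht. apply Ha. lra.
  - intros t Ht. apply Hb. lra.
  - intros t Ht Htx0. apply Hneg; lra.
  - intros t Ht Htx0. apply Hpos; lra.
  - rewrite HU by lra. exact HuL.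
  - rewrite HU by lra. exact HuL'.
Qed.
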